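(* Suppose there is $\theta\in\mathcal I$ with $\nu(\{\overline{\boldsymbol\theta}\in\Sigma:\theta_1=\theta\})>0$ such that for every $i\in[N]$, $f_\theta^{(i)}[\mathbf 0]+\sum_{j\in[N]}f_\theta^{(i)}[\mathbf e_j]<1.$ Then the multitype branching process in random environment $(\mathbf Z_n)$ is strongly regular.
   Context: $N\ge2$, $\mathcal I$ countable, $\Sigma=\mathcal I^{\mathbb N}$, $\nu$ a shift-invariant ergodic probability measure on $\Sigma$ (the law of the environment); $[N]=\{0,\dots,N-1\}$; $\mathbf e_j$ is the $j$-th unit vector and $\mathbf 0$ the zero vector of $\mathbb N_0^N$. For $\theta\in\mathcal I$, $f_\theta^{(i)}(\mathbf s)=\sum_{\mathbf z\in\mathbb N_0^N}f_\theta^{(i)}[\mathbf z]\mathbf s^{\mathbf z}$, $i\in[N]$, are pgfs on $\mathbb N_0^N$. In environment $\overline{\boldsymbol\theta}=(\theta_1,\theta_2,\dots)$, each type-$i$ individual of generation $n-1$ independently produces an offspring vector $\mathbf y$ ($y_j$ type-$j$ children) with probability $f_{\theta_n}^{(i)}[\mathbf y]$; $\mathbf Z_n$ is the sum and $\|\mathbf Z_n\|$ the total number of individuals. The process is strongly regular if there exists $n$ such that $\nu\big(\{\overline{\boldsymbol\theta}:\min_{i\in[N]}P_{\overline{\boldsymbol\theta}}(\|\mathbf Z_n\|>1\mid\mathbf Z_0=\mathbf e_i)>0\}\big)>0$, where $P_{\overline{\boldsymbol\theta}}$ is the law of the process in the fixed environment $\overline{\boldsymbol\theta}$. *)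

From HB Require Import structures.
From mathcomp Require Import all_boot all_order all_algebra.
From mathcomp Require Import all_classical all_reals.
From mathcomp Require Import ereal esum measure probability.

Set Implicit Arguments.
Unset Strict Implicit.
Unset Printing Implicit Defensive.

Import Order.TTheory GRing.Theory Num.Theory.
Local Open Scope classical_set_scope.
Local Open Scope ring_scope.

Definition vec (N : nat) := {ffun 'I_N -> nat}.

Definition vadd N (x y : vec N) : vec N := [ffun k => x k + y k]%N.
Definition vzero N : vec N := [ffun _ => 0%N].
Definition unitv N (j : 'I_N) : vec N := [ffun k => nat_of_bool (k == j)].
Definition vnorm N (x : vec N) : nat := (\sum_(k < N) x k)%N.

(** cylinder generators: preimages of arbitrary subsets of the (countable,
    discrete) type space I under the coordinate maps. *)
Definition cylinders (I : Type) : set (set (nat -> I)) :=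
  [set C | exists (k : nat) (A : set I), C = (fun w : nat -> I => w k) @^-1` A].

Definition Env (I : pointedType) := g_sigma_algebraType (@cylinders I).

Definition shift (I : Type) (w : nat -> I) : nat -> I := fun k => w k.+1.

Definition shift_invariant (R : realType) (I : pointedType)
  (nu : probability (Env I) R) : Prop :=
  forall A : set (Env I), measurable A -> nu (@shift I @^-1` A) = nu A.

Definition ergodic (R : realType) (I : pointedType)
  (nu : probability (Env I) R) : Prop :=
  forall A : set (Env I), measurable A -> @shift I @^-1` A = A ->
    nu A = 0%E \/ nu A = 1%E.

(** [f theta i y] = f_theta^{(i)}[y] : probability that a type-i individual
    has offspring vector y in environment state theta. *)
Definition is_offspring_family (R : realType) (I : Type) N
  (f : I -> 'I_N -> vec N -> R) : Prop :=
  forall theta i, (forall y, 0 <= f theta i y) /\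
                  (\esum_(y in [set: vec N]) (f theta i y)%:E = 1)%E.

Definition dist (R : realType) N := vec N -> \bar R.

Definition ddirac (R : realType) N (z : vec N) : dist R N :=
  fun y => (if y == z then 1 else 0)%:E.

Definition dconv (R : realType) N (p q : dist R N) : dist R N :=
  fun y => (\esum_(ab in [set ab : vec N * vec N | vadd ab.1 ab.2 = y])
              (p ab.1 * q ab.2))%E.

(** law of the offspring vector of a population z (z_i individuals of type i,
    reproducing independently) when the environment state is theta *)
Definition pop_offspring (R : realType) (I : Type) N
  (f : I -> 'I_N -> vec N -> R) (theta : I) (z : vec N) : dist R N :=
  foldr (fun i acc => iter (z i) (dconv (fun y => (f theta i y)%:E)) acc)
        (ddirac R (vzero N)) (enum 'I_N).

(** law of Z_n in the fixed environment w = (theta_1, theta_2, ...)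
    (theta_{k+1} = w k), given Z_0 = z; generation n is produced from
    generation n-1 according to theta_n. *)
Fixpoint Zlaw (R : realType) (I : Type) N (f : I -> 'I_N -> vec N -> R)
  (w : nat -> I) (n : nat) (z : vec N) : dist R N :=
  match n with
  | 0 => ddirac R z
  | m.+1 => fun y =>
      (\esum_(x in [set: vec N]) (Zlaw f w m z x * pop_offspring f (w m) x y))%E
  end.

Definition prob_more_than_one (R : realType) (I : Type) N
  (f : I -> 'I_N -> vec N -> R) (w : nat -> I) (n : nat) (i : 'I_N) : \bar R :=
  (\esum_(y in [set y : vec N | (1 < vnorm y)%N]) Zlaw f w n (unitv i) y)%E.

Definition strongly_regular (R : realType) (I : pointedType) N
  (nu : probability (Env I) R) (f : I -> 'I_N -> vec N -> R) : Prop :=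
  exists n : nat,
    (0 < nu [set w : Env I | forall i : 'I_N, (0 < prob_more_than_one f w n i)%E])%E.

From HB Require Import structures.
From mathcomp Require Import all_boot all_order all_algebra.
From mathcomp Require Import all_classical all_reals.
From mathcomp Require Import ereal esum measure probability.

(* One generation suffices.  If for every type i the offspring law
   f_theta^(i) put all its mass on 0 and the unit vectors e_j, its total mass
   f_theta^(i)[0] + sum_j f_theta^(i)[e_j] would be 1; so each type i has an
   offspring vector y with ||y|| > 1 and f_theta^(i)[y] > 0.  Hence
   P_w(||Z_1|| > 1 | Z_0 = e_i) > 0 for all i whenever theta_1 = theta, and the
   latter event has positive nu-measure. *)

Set Implicit Arguments.
Unset Strict Implicit.
Import Order.TTheory GRing.Theory Num.Theory.
Local Open Scope classical_set_scope.
Local Open Scope ring_scope.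

Lemma le_term_esum (R : realType) (T : choiceType) (D : set T)
    (a : T -> \bar R) t :
  D t -> (a t <= \esum_(i in D) a i)%E.
Proof.
move=> Dt; apply: esum_ge; exists [set t]; last by rewrite fsbig_set1.
by split; [exact: finite_set1 | move=> x ->].
Qed.

Lemma esum_indicator (R : realType) (T : choiceType) (z : T) (c : R) :
  0 <= c -> (\esum_(y in [set: T]) (if y == z then c else 0)%:E = c%:E)%E.
Proof.
move=> c_ge0; rewrite -[RHS](@esum_set1 _ _ z (fun=> c%:E)) ?lee_fin //.
rewrite [RHS]esum_mkcond; apply: eq_esum => y _.
by rewrite in_set1; case: eqP.
Qed.

Lemma vnorm_vzero N : vnorm (vzero N) = 0%N.
Proof. by rewrite /vnorm big1 // => k _; rewrite ffunE. Qed.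

Lemma vnorm0P N (y : vec N) : vnorm y = 0%N -> y = vzero N.
Proof.
move/eqP; rewrite sum_nat_eq0 => /forallP y0.
by apply/ffunP => k; rewrite ffunE; apply/eqP; exact: y0.
Qed.

Lemma vnorm1P N (y : vec N) : vnorm y = 1%N -> exists j, y = unitv j.
Proof.
move=> y1; have [j yj_gt0] : exists j, (0 < y j)%N.
  apply/existsP; apply: contraT; rewrite negb_exists => /forallP y0.
  suff y_0 : y = vzero N by move: y1; rewrite y_0 vnorm_vzero.
  by apply/ffunP => k; rewrite ffunE; apply/eqP; rewrite -leqn0 leqNgt y0.
have /eqP : (y j + \sum_(k < N | k != j) y k = 1)%N.
  by rewrite -y1 /vnorm [in RHS](bigD1 j).
rewrite addn_eq1 (gtn_eqF yj_gt0) orbF sum_nat_eq0 => /andP[/eqP yj /forallP yk].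
exists j; apply/ffunP => k; rewrite ffunE.
by case: eqVneq => [->|kj] //; apply/eqP; move: (yk k); rewrite kj.
Qed.

Lemma vnorm_unitv N (j : 'I_N) : vnorm (unitv j) = 1%N.
Proof.
rewrite /vnorm (bigD1 j) //= ffunE eqxx big1 // => k kj.
by rewrite ffunE (negbTE kj).
Qed.

Section MassOutsideUnitBall.
Variables (R : realType) (N : nat) (p : vec N -> R).
Hypothesis p_ge0 : forall y, 0 <= p y.

Let small_mass := p (vzero N) + \sum_(j < N) p (unitv j).

Lemma esum_le_small_mass :
  (forall y, (1 < vnorm y)%N -> p y <= 0) ->
  (\esum_(y in [set: vec N]) (p y)%:E <= small_mass%:E)%E.
Proof.
move=> p_large; pose delta z y := (if y == z then p z else 0)%:E.
have delta_ge0 z y : (0 <= delta z y)%E by rewrite /delta lee_fin; case: eqP.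
have deltas_ge0 y : (0 <= \sum_(j < N) delta (unitv j) y)%E.
  by apply: sume_ge0 => j _; exact: delta_ge0.
have p_le y : ((p y)%:E <= delta (vzero N) y + \sum_(j < N) delta (unitv j) y)%E.
  case: (ltnP 1 (vnorm y)) => [/p_large py_le0|].
    by apply: le_trans (adde_ge0 (delta_ge0 _ _) (deltas_ge0 _)); rewrite lee_fin.
  rewrite leq_eqVlt ltnS leqn0 => /orP[/eqP/vnorm1P[j ->]|/eqP/vnorm0P ->].
    apply: le_trans (leeDr _ (delta_ge0 _ _)).
    by rewrite (bigD1 j) //= {1}/delta eqxx leeDl // sume_ge0.
  by rewrite {1}/delta eqxx leeDl.
apply: le_trans (le_esum (fun y _ => p_le y)) _.
rewrite esumD => [||y _]; last exact: sume_ge0.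
- rewrite esum_sum => [|y j _ _]; last exact: delta_ge0.
  rewrite esum_indicator //; under eq_bigr do rewrite esum_indicator //.
  by rewrite sumEFin -EFinD.
- by move=> y _; exact: delta_ge0.
Qed.

Lemma exists_vnorm_gt1_mass :
  (\esum_(y in [set: vec N]) (p y)%:E = 1)%E -> small_mass < 1 ->
  exists y, (1 < vnorm y)%N /\ 0 < p y.
Proof.
move=> p_sum1 small_lt1; apply: contrapT => no_large.
have p_large y : (1 < vnorm y)%N -> p y <= 0.
  by move=> y_large; rewrite leNgt; apply/negP => py_gt0; apply: no_large; exists y.
have := esum_le_small_mass p_large; rewrite p_sum1 lee_fin.
by rewrite leNgt small_lt1.
Qed.

End MassOutsideUnitBall.

Lemma foldr_iter_unitv (T : Type) N (i : 'I_N) (F : 'I_N -> T -> T) d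
    (s : seq 'I_N) :
  uniq s ->
  foldr (fun k acc => iter (unitv i k) (F k) acc) d s =
    if i \in s then F i d else d.
Proof.
elim: s => //= k s IHs /andP[ks s_uniq]; rewrite IHs // ffunE in_cons.
by case: (eqVneq k i) => [<-|] //=; rewrite (negbTE ks).
Qed.

Lemma pop_offspring_unitv (R : realType) (I : Type) N
    (f : I -> 'I_N -> vec N -> R) theta i :
  pop_offspring f theta (unitv i) =
    dconv (fun y => (f theta i y)%:E) (ddirac R (vzero N)).
Proof. by rewrite /pop_offspring foldr_iter_unitv ?enum_uniq // mem_enum. Qed.

Lemma dconv_ddirac0_ge (R : realType) N (p : dist R N) y :
  (p y <= dconv p (ddirac R (vzero N)) y)%E.
Proof.
apply: le_trans (le_term_esum (t := (y, vzero N)) _ _).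
  by rewrite /= /ddirac eqxx mule1.
by apply/ffunP => k; rewrite /= !ffunE addn0.
Qed.

Lemma Zlaw1_unitv_ge (R : realType) (I : Type) N
    (f : I -> 'I_N -> vec N -> R) w i y :
  ((f (w 0%N) i y)%:E <= Zlaw f w 1 (unitv i) y)%E.
Proof.
apply: le_trans (le_term_esum (t := unitv i) _ _) => //=.
by rewrite /ddirac eqxx mul1e pop_offspring_unitv dconv_ddirac0_ge.
Qed.

Lemma prob_more_than_one1_ge (R : realType) (I : Type) N
    (f : I -> 'I_N -> vec N -> R) w i y :
  (1 < vnorm y)%N -> ((f (w 0%N) i y)%:E <= prob_more_than_one f w 1 i)%E.
Proof.
by move=> y_large; apply: le_trans (Zlaw1_unitv_ge f w i y) (le_term_esum _ _).
Qed.

Lemma measurable_coord_preimage (I : pointedType) (k : nat) (A : set I) :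
  measurable ((fun w : Env I => w k) @^-1` A).
Proof. by apply: sub_gen_smallest; exists k, A. Qed.

Theorem fact4p7 (R : realType) (N : nat) (I : pointedType)
  (nu : probability (Env I) R) (f : I -> 'I_N -> vec N -> R) :
  (2 <= N)%N ->
  countable [set: I] ->
  shift_invariant nu ->
  ergodic nu ->
  is_offspring_family f ->
  (exists theta : I,
      (0 < nu [set w : Env I | w 0%N = theta])%E /\
      (forall i : 'I_N,
          f theta i (vzero N) + \sum_(j < N) f theta i (unitv j) < 1)) ->
  strongly_regular nu f.
Proof.
move=> _ _ _ _ f_law [theta [theta_pos small_lt1]]; exists 1%N.
have large_offspring i : exists y, (1 < vnorm y)%N /\ 0 < f theta i y.
  have [f_ge0 f_sum1] := f_law theta i.
  exact: exists_vnorm_gt1_mass f_ge0 f_sum1 (small_lt1 i).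
apply: (lt_le_trans theta_pos); apply: le_measure; rewrite ?inE.
- exact: (measurable_coord_preimage 0 [set theta]).
- (* Z_1 only sees theta_1 = w 0, so the event is a cylinder over it. *)
  exact: (measurable_coord_preimage 0
    [set t | forall i, (0 < prob_more_than_one f (fun=> t) 1 i)%E]).
- move=> w /= w0 i; have [y [y_large fy_gt0]] := large_offspring i.
  apply: lt_le_trans (prob_more_than_one1_ge f w i y_large).
  by rewrite w0 lte_fin.
Qed.
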